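(* Let $G$ be a finite group, $p$ a prime, and suppose $G'\not\subseteq Z(G)$ and one of the following holds: (a) $G'\cong C_{p^2}$ and $\gcd(p-1,|G|)=1$; (b) $G'\cong C_p\times C_p$ and $\gcd(p^2-1,|G|)=1$. Then $|G/C_G(G')|=|G'\cap Z(G)|=|\mathrm{Cl}_G(x)|=p$ for all $x\in G'\setminus Z(G)$.
   Context: $G'$ is the commutator subgroup, $Z(G)$ the center, $C_G(G')$ the centralizer of $G'$ in $G$, and $\mathrm{Cl}_G(x)$ the conjugacy class of $x$ in $G$. *)

From mathcomp Require Import all_boot all_fingroup all_solvable all_algebra.

From mathcomp Require Import all_boot all_fingroup all_solvable all_algebra.
From mathcomp Require Import mxrepresentation mxabelem.
(* G / C_G(G') embeds in Aut(G'), of order p(p-1) in case (a) and dividing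
   |GL_2(p)| = p(p-1)^2(p+1) in case (b), so the coprimality hypotheses force
   |G : C_G(G')| to divide p; it is not 1 as G' is not central.  The class of
   any x in G' \ Z(G) has size dividing that index, hence exactly p, so p
   divides |G' \ Z(G)| = p^2 - |G' ∩ Z(G)|, which leaves |G' ∩ Z(G)| = p. *)

Set Implicit Arguments.
Unset Strict Implicit.
Unset Printing Implicit Defensive.
Local Open Scope group_scope.

Lemma Zp_setT_cyclic n : cyclic [set: 'Z_n].
Proof. by rewrite Zp_cycle cycle_cyclic. Qed.

Lemma Zp_setX_abelem p : prime p -> p.-abelem [set: 'Z_p * 'Z_p].
Proof.
move=> pr_p; apply/abelemP => //; split.
  by apply/centsP => -[a b] _ [c d] _; congr pair; apply: Zp_mulgC.
move=> [a b] _.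
have expX n : ((a, b) : 'Z_p * 'Z_p) ^+ n = (a ^+ n, b ^+ n).
  by elim: n => [|n IHn] //; rewrite !expgS IHn.
have Zp_p (x : 'Z_p) : x ^+ p = 1.
  apply: val_inj; rewrite Zp_expg /= -{2}(Zp_cast (prime_gt1 pr_p)).
  by rewrite modnMl.
by rewrite expX !Zp_p.
Qed.

Lemma index_ker_dvdn (aT rT : finGroupType) (A : {group aT})
    (f : {morphism A >-> rT}) (G : {group aT}) (H : {group rT}) :
  G \subset A -> f @* G \subset H -> #|G : 'ker_G f| %| #|H|.
Proof.
move=> sGA sfGH; rewrite (indexgI G ('ker f)) -(setIidPr sGA) -card_morphim.
exact: cardSg.
Qed.

Section SubcentIndex.

Variables (gT : finGroupType) (G D : {group gT}).
Hypothesis nDG : G \subset 'N(D).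

Lemma index_subcent_dvd_Aut : #|G : 'C_G(D)| %| #|Aut D|.
Proof. by rewrite -ker_conj_aut index_ker_dvdn ?Aut_conj_aut. Qed.

Lemma index_subcent_dvd_GL p (abelD : p.-abelem D) (ntD : D :!=: 1) :
  #|G : 'C_G(D)| %| #|'GL_('dim D)['F_p]|.
Proof.
have := @index_ker_dvdn _ _ _ (reprGLm (abelem_repr abelD ntD nDG)) G
  [set: _]%G (subxx G) (subsetT _).
by rewrite ker_reprGLm rker_abelem setIA setIid.
Qed.

Lemma card_class_dvd_index_subcent x :
  x \in D -> #|x ^: G| %| #|G : 'C_G(D)|.
Proof.
move=> Dx; rewrite -index_cent1; apply/indexgS/setIS.
by rewrite sub_cent1 (subsetP _ x Dx) // centsC.
Qed.

Variable p : nat.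
Hypotheses (pr_p : prime p) (oD : #|D| = (p ^ 2)%N).

Lemma index_subcent_dvd_cyclic_sq :
  cyclic D -> coprime (p - 1) #|G| -> #|G : 'C_G(D)| %| p.
Proof.
move=> cycD cop; have := index_subcent_dvd_Aut.
rewrite card_Aut_cyclic // oD totient_pfactor // -subn1 Gauss_dvdr //.
by rewrite coprime_sym (coprime_dvdr (dvdn_indexg _ _)).
Qed.

Lemma index_subcent_dvd_abelem_sq :
  p.-abelem D -> coprime (p ^ 2 - 1) #|G| -> #|G : 'C_G(D)| %| p.
Proof.
move=> abelD cop.
have ntD : D :!=: 1 by rewrite -cardG_gt1 oD (ltn_exp2l 0) ?prime_gt1.
have := index_subcent_dvd_GL abelD ntD.
rewrite (dim_abelemE abelD ntD) oD pfactorK // card_GL_2 card_Fp //.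
have /andP[cop_pred cop_succ] :
    coprime #|G : 'C_G(D)| p.-1 && coprime #|G : 'C_G(D)| p.+1.
  have sq1 : (p.-1 * p.+1 = p ^ 2 - 1)%N.
    by rewrite -subn1 -[p.+1]addn1 -subn_sqr exp1n.
  rewrite -coprimeMr sq1 coprime_sym; exact: coprime_dvdr (dvdn_indexg _ _) cop.
have cop_GL : coprime #|G : 'C_G(D)| (p.-1 ^ 2 * p.+1).
  by rewrite coprimeMr coprimeXr ?cop_pred.
by rewrite -mulnA Gauss_dvdl.
Qed.

End SubcentIndex.

Lemma dvdn_card_orbits (aT : finGroupType) (D : {group aT}) (T : finType)
    (to : action D T) (A : {group aT}) (S : {set T}) n :
  [acts A, on S | to] -> {in S, forall x, #|orbit to A x| = n} -> n %| #|S|.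
Proof.
move=> actS cardS; rewrite -(acts_sum_card_orbit actS).
by apply: dvdn_sum => _ /imsetP[x Sx ->]; rewrite cardS.
Qed.

Lemma eq_prime_of_dvdn_sq p m :
  prime p -> m %| p ^ 2 -> p %| p ^ 2 - m -> m < p ^ 2 -> m = p.
Proof.
move=> pr_p /(dvdn_pfactor _ _ pr_p)[[|[|[|k]]] //= _ ->]; rewrite ?ltnn //.
rewrite expn0 dvdn_subr ?expn_gt0 ?prime_gt0 ?dvdn_exp // dvdn1.
by move=> /eqP p1; rewrite p1 in pr_p.
Qed.

Theorem lemma3p2 (gT : finGroupType) (G : {group gT}) (p : nat) :
  prime p ->
  ~~ (G^`(1) \subset 'Z(G)) ->
  (G^`(1) \isog [set: 'Z_(p ^ 2)] /\ coprime (p - 1) #|G|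
   \/ G^`(1) \isog [set: 'Z_p * 'Z_p] /\ coprime (p ^ 2 - 1) #|G|) ->
  #|G / 'C_G(G^`(1))| = p /\ #|G^`(1) :&: 'Z(G)| = p /\
  (forall x, x \in G^`(1) :\: 'Z(G) -> #|x ^: G| = p).
Proof.
move=> pr_p nDZ hyp; set D := G^`(1).
have nDG : G \subset 'N(D) := normal_norm (der_normal 1 G).
have p2_gt1 : 1 < p ^ 2 by rewrite (ltn_exp2l 0) ?prime_gt1.
have [oD dvd_idx_p] : #|D| = (p ^ 2)%N /\ #|G : 'C_G(D)| %| p.
  case: hyp => -[isoD cop].
    have oD : #|D| = (p ^ 2)%N by rewrite (card_isog isoD) cardsT card_ord Zp_cast.
    split; rewrite // (index_subcent_dvd_cyclic_sq nDG pr_p oD) //.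
    by rewrite (isog_cyclic isoD) Zp_setT_cyclic.
  have oD : #|D| = (p ^ 2)%N.
    by rewrite (card_isog isoD) cardsT card_prod card_ord Zp_cast ?prime_gt1.
  split; rewrite // (index_subcent_dvd_abelem_sq nDG pr_p oD) //.
  by rewrite (isog_abelem isoD) Zp_setX_abelem.
have idx_p : #|G : 'C_G(D)| = p.
  apply/(prime_nt_dvdP pr_p) => //; rewrite indexg_eq1 subsetI subxx centsC.
  by apply: contra nDZ => cDG; rewrite subsetI der_sub.
have card_cls x : x \in D :\: 'Z(G) -> #|x ^: G| = p.
  case/setDP => Dx nZx; apply/(prime_nt_dvdP pr_p).
    rewrite -index_cent1 indexg_eq1 subsetI subxx sub_cent1.
    by apply: contra nZx => cGx; rewrite inE (subsetP (der_sub 1 G)).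
  by rewrite -idx_p card_class_dvd_index_subcent.
have nCG : G \subset 'N('C_G(D)) by rewrite -{1}(setIidPl nDG) subcent_norm.
split; first by rewrite card_quotient.
split; last exact: card_cls.
apply: eq_prime_of_dvdn_sq => //; rewrite -oD.
- by rewrite cardSg ?subsetIl.
- rewrite -cardsD; apply: (@dvdn_card_orbits _ _ _ 'J G) => [|x /card_cls].
    by rewrite astabsJ normsD // normal_norm ?center_normal.
  by rewrite orbitJ.
- apply: proper_card; rewrite properEneq subsetIl andbT.
  by apply: contraNneq nDZ => /setIidPl.
Qed.
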